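(* Let $p,q\in\mathbb{N}$ with $q\ne0$, and suppose $x=p/q-1\in(-1,1)$ is regular for the sequence $n_j$ and $\lim_{j\to\infty}D_{n_j}(x)/n_j=L\in\overline{\mathbb{R}}$. Then $L$ is finite and $|L|=A(m^2/q^2)$ for some integer $m$ with $0\le m<q$. Moreover, there exists $j_0$ such that for all $j\ge j_0$, $(-1)^{\iota_{n_j}(x)}=\operatorname{sign}(L)$ and $|\rho_{n_j}(x)|=m/q$.
   Context: Nodes: $x_{k,n}:=2k/n-1$, $k=0,\dots,n$; $D_n(x)=\sum_{k=0}^n(-1)^k\frac{1}{x-x_{k,n}}$. $\iota_n(x):=\lfloor n(x+1)/2\rfloor$, $\rho_n(x):=n(x-x_{\iota_n(x),n})-1$. $A(y)=\sum_{k=0}^\infty(-1)^k\frac{4k+2}{(2k+1)^2-y}$ for $y\in[0,1)$. $\overline{\mathbb{R}}=\mathbb{R}\cup\{\pm\infty\}$ is the two-point compactification of $\mathbb{R}$. A sequence $n_j$ is a strictly increasing map $\mathbb{N}\to\mathbb{N}$; $x$ is regular for $n_j$ if there is $j_0$ with $x\notin\{x_{0,n_j},\dots,x_{n_j,n_j}\}$ for all $j\ge j_0$. *)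

From Stdlib Require Import Reals ZArith.
From Coquelicot Require Import Coquelicot.
Open Scope R_scope.

Definition node (k : Z) (n : nat) : R := 2 * IZR k / INR n - 1.

Definition Dn (n : nat) (x : R) : R :=
  sum_f_R0 (fun k => (-1) ^ k / (x - node (Z.of_nat k) n)) n.

Definition iota_n (n : nat) (x : R) : Z := Int_part (INR n * (x + 1) / 2).

Definition rho_n (n : nat) (x : R) : R := INR n * (x - node (iota_n n x) n) - 1.

(* A(y) = sum_{k>=0} (-1)^k (4k+2)/((2k+1)^2 - y)  (convergent for y in [0,1)) *)
Definition A_ser (y : R) : R :=
  Series (fun k : nat => (-1) ^ k * (4 * INR k + 2) / ((2 * INR k + 1) ^ 2 - y)).

Definition sgn (r : R) : R := if Rlt_dec 0 r then 1 else if Rlt_dec r 0 then -1 else 0.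

Definition strictly_increasing (n : nat -> nat) : Prop :=
  forall i j : nat, (i < j)%nat -> (n i < n j)%nat.

Definition regular (n : nat -> nat) (x : R) : Prop :=
  exists j0 : nat, forall j : nat, (j0 <= j)%nat ->
    forall k : nat, (k <= n j)%nat -> x <> node (Z.of_nat k) (n j).

(* Put t = n(x+1)/2, a = iota_n(x) = floor t and s = rho_n(x) = 2(t - a) - 1, which lies
   in (-1, 1) because x is not a node.  Splitting D_n(x) at k = a and reversing the first
   half gives
     D_n(x) / n = (-1)^a (sum_{i<=a} (-1)^i/(2i+1+s) + sum_{i<n-a} (-1)^i/(2i+1-s)),
   two partial sums of alternating series whose tails are O(1/n); by partial fractions
   the two full series add up to A(s^2).  Hence D_n(x)/n = (-1)^a A(s^2) + O(1/n).
   For x = p/q - 1 the number q s = np - (2a+1)q is an integer, so |s| = m/q with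
   0 <= m < q.  Since A is positive and strictly increasing on [0, 1), the 2q numbers
   +-A(m^2/q^2) are pairwise distinct; a sequence that approaches this finite set and
   converges must eventually sit at one of its points, which fixes both the sign
   (-1)^a and m. *)

From Stdlib Require Import Reals Lra Lia ZArith List.
From Coquelicot Require Import Coquelicot.
Open Scope R_scope.

Lemma alternated_series_remainder (u : nat -> R) :
  Un_decreasing u -> Un_cv u 0 ->
  exists l, is_series (tg_alt u) l /\
    forall N, Rabs (l - sum_f_R0 (tg_alt u) N) <= u (S N).
Proof.
intros Hdec Hcv.
destruct (alternated_series u Hdec Hcv) as [l Hl].
exists l; split; [now apply is_series_Reals|].
intros N; destruct (Nat.Even_or_Odd N) as [[M ->]|[M ->]].
- destruct (alternated_series_ineq u l M Hdec Hcv Hl) as [H1 H2].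
  rewrite tech5 in H1; unfold tg_alt at 2 in H1; rewrite pow_1_odd in H1.
  apply Rabs_le; lra.
- replace (2 * M + 1)%nat with (S (2 * M)) by lia.
  destruct (alternated_series_ineq u l M Hdec Hcv Hl) as [H1 _].
  destruct (alternated_series_ineq u l (S M) Hdec Hcv Hl) as [_ H2].
  replace (2 * S M)%nat with (S (S (2 * M))) in H2 by lia.
  rewrite tech5 in H2; unfold tg_alt at 2 in H2; rewrite <- !tech_pow_Rmult, pow_1_even in H2.
  apply Rabs_le; lra.
Qed.

Lemma alternated_series_lower (u : nat -> R) (l : R) :
  (forall N, Rabs (l - sum_f_R0 (tg_alt u) N) <= u (S N)) -> u 0%nat - u 1%nat <= l.
Proof.
intros Hrem; specialize (Hrem 0%nat); simpl sum_f_R0 in Hrem; unfold tg_alt in Hrem.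
rewrite pow_O, Rmult_1_l in Hrem; apply Rabs_le_between in Hrem; lra.
Qed.

Lemma Un_cv_0_of_le_div (w : nat -> R) (C : R) :
  (forall k, (1 <= k)%nat -> 0 <= w k <= C / INR k) -> Un_cv w 0.
Proof.
intros Hw; apply is_lim_seq_Reals.
apply (is_lim_seq_le_le_loc (fun _ => 0) w (fun k => C * / INR k)).
- exists 1%nat; exact Hw.
- apply is_lim_seq_const.
- replace (Finite 0) with (Rbar_mult C 0) by (simpl; f_equal; ring).
  apply is_lim_seq_scal_l.
  replace (Finite 0) with (Rbar_inv p_infty) by reflexivity.
  apply is_lim_seq_inv; [apply is_lim_seq_INR|discriminate].
Qed.

Definition odd_inv (s : R) (k : nat) : R := / (2 * INR k + 1 + s).

Definition alt_odd_series (s : R) : R := Series (tg_alt (odd_inv s)).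

Lemma odd_inv_pos s k : -1 < s -> 0 < odd_inv s k.
Proof. intros; apply Rinv_0_lt_compat; pose proof (pos_INR k); lra. Qed.

Lemma alt_odd_series_spec s : -1 < s ->
  is_series (tg_alt (odd_inv s)) (alt_odd_series s) /\
  forall N, Rabs (alt_odd_series s - sum_f_R0 (tg_alt (odd_inv s)) N)
            <= odd_inv s (S N).
Proof.
intros Hs.
assert (Hdec : Un_decreasing (odd_inv s)).
{ intros k; apply Rinv_le_contravar; rewrite ?S_INR; pose proof (pos_INR k); lra. }
assert (Hcv : Un_cv (odd_inv s) 0).
{ apply Un_cv_0_of_le_div with 1; intros k Hk; split; [now left; apply odd_inv_pos|].
  assert (1 <= INR k) by now apply (le_INR 1).
  unfold Rdiv; rewrite Rmult_1_l; apply Rinv_le_contravar; lra. }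
destruct (alternated_series_remainder _ Hdec Hcv) as [l [Hl Hrem]].
unfold alt_odd_series; rewrite (is_series_unique _ _ Hl); auto.
Qed.

Lemma alt_odd_series_pos s : -1 < s -> 0 < alt_odd_series s.
Proof.
intros Hs; destruct (alt_odd_series_spec s Hs) as [_ Hrem].
apply alternated_series_lower in Hrem.
assert (odd_inv s 1 < odd_inv s 0)
  by (unfold odd_inv; rewrite INR_0, INR_1; apply Rinv_lt_contravar; nra).
lra.
Qed.

Definition A_term (y : R) (k : nat) : R :=
  (-1) ^ k * (4 * INR k + 2) / ((2 * INR k + 1) ^ 2 - y).

(* partial fractions: (4k+2) / ((2k+1)^2 - s^2) = 1 / (2k+1+s) + 1 / (2k+1-s) *)
Lemma is_series_A_term_sq s : -1 < s < 1 ->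
  is_series (A_term (s ^ 2)) (alt_odd_series s + alt_odd_series (- s)).
Proof.
intros Hs.
destruct (alt_odd_series_spec s) as [H1 _]; [lra|].
destruct (alt_odd_series_spec (- s)) as [H2 _]; [lra|].
eapply is_series_ext; [|exact (is_series_plus _ _ _ _ H1 H2)].
intros k; unfold A_term, tg_alt, odd_inv; change plus with Rplus; simpl.
pose proof (pos_INR k); field; repeat split; nra.
Qed.

Lemma A_ser_sq s : -1 < s < 1 ->
  A_ser (s ^ 2) = alt_odd_series s + alt_odd_series (- s).
Proof. intros Hs; exact (is_series_unique _ _ (is_series_A_term_sq s Hs)). Qed.

Lemma ex_sqrt_unit y : 0 <= y < 1 -> exists s, 0 <= s < 1 /\ s ^ 2 = y.
Proof.
intros Hy; exists (sqrt y); split; [split|].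
- apply sqrt_pos.
- rewrite <- sqrt_1; apply sqrt_lt_1; lra.
- simpl; rewrite Rmult_1_r; now apply sqrt_sqrt.
Qed.

Lemma is_series_A_term y : 0 <= y < 1 -> is_series (A_term y) (A_ser y).
Proof.
intros Hy; destruct (ex_sqrt_unit y Hy) as [s [Hs <-]].
rewrite A_ser_sq by lra; apply is_series_A_term_sq; lra.
Qed.

Lemma A_ser_pos y : 0 <= y < 1 -> 0 < A_ser y.
Proof.
intros Hy; destruct (ex_sqrt_unit y Hy) as [s [Hs <-]].
rewrite A_ser_sq by lra.
pose proof (alt_odd_series_pos s); pose proof (alt_odd_series_pos (- s)); lra.
Qed.

Lemma Rdiv_le_cross a b c d : 0 < b -> 0 < d -> a * d <= c * b -> a / b <= c / d.
Proof.
intros Hb Hd H; apply Rmult_le_reg_r with (b * d); [now apply Rmult_lt_0_compat|].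
replace (a / b * (b * d)) with (a * d) by (field; lra).
replace (c / d * (b * d)) with (c * b) by (field; lra).
exact H.
Qed.

Definition A_diff_coef (y1 y2 : R) (k : nat) : R :=
  (4 * INR k + 2) / (((2 * INR k + 1) ^ 2 - y2) * ((2 * INR k + 1) ^ 2 - y1)).

Lemma A_term_sub y1 y2 k : 0 <= y1 < 1 -> 0 <= y2 < 1 ->
  A_term y2 k - A_term y1 k = (y2 - y1) * tg_alt (A_diff_coef y1 y2) k.
Proof.
intros H1 H2; unfold A_term, tg_alt, A_diff_coef; pose proof (pos_INR k).
field; split; nra.
Qed.

Lemma A_diff_coef_decreasing y1 y2 : 0 <= y1 < 1 -> 0 <= y2 < 1 ->
  Un_decreasing (A_diff_coef y1 y2).
Proof.
intros H1 H2 k; unfold A_diff_coef; rewrite S_INR.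
set (c := 2 * INR k + 1); pose proof (pos_INR k).
replace (4 * (INR k + 1) + 2) with (2 * (c + 2)) by (unfold c; ring).
replace (2 * (INR k + 1) + 1) with (c + 2) by (unfold c; ring).
replace (4 * INR k + 2) with (2 * c) by (unfold c; ring).
assert (1 <= c) by (unfold c; lra).
assert (0 < c ^ 2 - y1) by nra; assert (0 < c ^ 2 - y2) by nra.
apply Rdiv_le_cross; try (apply Rmult_lt_0_compat; nra).
assert ((c + 2) * (c ^ 2 - y2) <= c * ((c + 2) ^ 2 - y2)) by nra.
assert (c ^ 2 - y1 <= (c + 2) ^ 2 - y1) by nra.
nra.
Qed.

Lemma A_diff_coef_cv0 y1 y2 : 0 <= y1 < 1 -> 0 <= y2 < 1 ->
  Un_cv (A_diff_coef y1 y2) 0.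
Proof.
intros H1 H2; apply Un_cv_0_of_le_div with 1; intros k Hk.
assert (1 <= INR k) by now apply (le_INR 1).
unfold A_diff_coef; set (c := 2 * INR k + 1).
assert (4 * INR k * (INR k + 1) <= c ^ 2 - y1) by (unfold c; nra).
assert (4 * INR k * (INR k + 1) <= c ^ 2 - y2) by (unfold c; nra).
split; [apply Rdiv_le_0_compat; [lra|apply Rmult_lt_0_compat; nra]|].
apply Rdiv_le_cross; [apply Rmult_lt_0_compat; nra|lra|].
assert (4 * INR k * (INR k + 1) * (4 * INR k * (INR k + 1)) <= (c ^ 2 - y2) * (c ^ 2 - y1))
  by (apply Rmult_le_compat; nra).
nra.
Qed.

Lemma A_ser_increasing y1 y2 : 0 <= y1 -> y1 < y2 -> y2 < 1 -> A_ser y1 < A_ser y2.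
Proof.
intros H0 H12 H2.
assert (Y1 : 0 <= y1 < 1) by lra; assert (Y2 : 0 <= y2 < 1) by lra.
destruct (alternated_series_remainder _ (A_diff_coef_decreasing y1 y2 Y1 Y2)
  (A_diff_coef_cv0 y1 y2 Y1 Y2)) as [l [Hl Hrem]].
assert (Hdiff : A_ser y2 - A_ser y1 = (y2 - y1) * l).
{ assert (Hd : is_series (fun k => A_term y2 k - A_term y1 k) (A_ser y2 - A_ser y1))
    by exact (is_series_minus _ _ _ _ (is_series_A_term y2 Y2) (is_series_A_term y1 Y1)).
  rewrite <- (is_series_unique _ _ Hd); apply is_series_unique.
  eapply is_series_ext; [|exact (is_series_scal (y2 - y1) _ _ Hl)].
  intros k; symmetry; exact (A_term_sub y1 y2 k Y1 Y2). }
assert (Hl0 : 0 < l).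
{ apply alternated_series_lower in Hrem.
  assert (2 <= A_diff_coef y1 y2 0).
  { unfold A_diff_coef; rewrite INR_0; apply Rle_div_r; [apply Rmult_lt_0_compat|]; nra. }
  assert (A_diff_coef y1 y2 1 <= 1).
  { unfold A_diff_coef; rewrite INR_1; apply Rle_div_l; [apply Rmult_lt_0_compat|]; nra. }
  lra. }
nra.
Qed.

Lemma ratio_sq_bounds (m q : nat) : (m < q)%nat -> 0 <= INR m ^ 2 / INR q ^ 2 < 1.
Proof.
intros Hm; apply lt_INR in Hm; pose proof (pos_INR m).
split; [apply Rdiv_le_0_compat; nra|].
apply Rlt_div_l; nra.
Qed.

Lemma A_ser_inj y1 y2 : 0 <= y1 < 1 -> 0 <= y2 < 1 -> A_ser y1 = A_ser y2 -> y1 = y2.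
Proof.
intros H1 H2 E; destruct (Rtotal_order y1 y2) as [H|[H|H]]; auto.
- pose proof (A_ser_increasing y1 y2 ltac:(lra) H ltac:(lra)); lra.
- pose proof (A_ser_increasing y2 y1 ltac:(lra) H ltac:(lra)); lra.
Qed.

Lemma A_ser_ratio_sq_inj (q m1 m2 : nat) : (m1 < q)%nat -> (m2 < q)%nat ->
  A_ser (INR m1 ^ 2 / INR q ^ 2) = A_ser (INR m2 ^ 2 / INR q ^ 2) -> m1 = m2.
Proof.
intros H1 H2 E.
apply A_ser_inj in E; [|apply ratio_sq_bounds, H1|apply ratio_sq_bounds, H2].
assert (0 < INR q ^ 2) by (apply pow_lt, lt_0_INR; lia).
apply Rmult_eq_reg_r in E; [|apply Rinv_neq_0_compat; lra].
apply INR_eq, Rsqr_inj; try apply pos_INR.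
unfold Rsqr; simpl in E; rewrite !Rmult_1_r in E; exact E.
Qed.

Lemma sum_f_R0_rev (g : nat -> R) (N : nat) :
  sum_f_R0 (fun i => g (N - i)%nat) N = sum_f_R0 g N.
Proof.
revert g; induction N as [|N IH]; intros g; [reflexivity|].
rewrite decomp_sum by lia; simpl pred.
rewrite tech5, Nat.sub_0_r, <- (IH g); simpl; ring.
Qed.

Lemma pow_m1_sub a i : (i <= a)%nat -> (-1) ^ (a - i) = (-1) ^ a * (-1) ^ i.
Proof.
intros H.
replace a with ((a - i) + i)%nat at 2 by lia.
rewrite pow_add, Rmult_assoc, <- pow_add.
replace (i + i)%nat with (2 * i)%nat by lia.
rewrite pow_1_even; ring.
Qed.

Lemma Dn_div_split (n a : nat) (x s : R) : (a < n)%nat ->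
  s = INR n * (x + 1) - 2 * INR a - 1 -> -1 < s < 1 ->
  Dn n x / INR n = (-1) ^ a * (sum_f_R0 (tg_alt (odd_inv s)) a +
                               sum_f_R0 (tg_alt (odd_inv (- s))) (n - S a)).
Proof.
intros Han Hs Hs1.
assert (Hn : 0 < INR n) by (apply lt_0_INR; lia).
unfold Dn; rewrite (tech2 _ a n Han), <- (sum_f_R0_rev _ a).
rewrite Rmult_plus_distr_l, !scal_sum, Rdiv_plus_distr, !Rdiv_def, !(Rmult_comm _ (/ INR n)),
  !scal_sum.
f_equal; apply sum_eq; intros i Hi; unfold tg_alt, odd_inv, node;
  rewrite <- INR_IZR_INZ; pose proof (pos_INR i).
- rewrite minus_INR, pow_m1_sub by lia.
  replace (x - (2 * (INR a - INR i) / INR n - 1)) with ((2 * INR i + 1 + s) / INR n)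
    by (subst s; field; lra).
  field; split; lra.
- rewrite plus_INR, S_INR, pow_add; simpl pow.
  replace (x - (2 * (INR a + 1 + INR i) / INR n - 1)) with (- (2 * INR i + 1 + - s) / INR n)
    by (subst s; field; lra).
  field; split; lra.
Qed.

Lemma rho_n_eq (n : nat) (x : R) : (0 < n)%nat ->
  rho_n n x = INR n * (x + 1) - 2 * IZR (iota_n n x) - 1.
Proof.
intros Hn; assert (0 < INR n) by (apply lt_0_INR; lia).
unfold rho_n, node; field; lra.
Qed.

Section Fixed_n.

Variables (n : nat) (x : R).
Hypotheses (Hn : (0 < n)%nat) (Hx : -1 < x < 1)
  (Hnode : forall k, (k <= n)%nat -> x <> node (Z.of_nat k) n).

Lemma iota_n_bounds :
  let t := INR n * (x + 1) / 2 in
  0 <= IZR (iota_n n x) < t /\ t < IZR (iota_n n x) + 1 /\ t < INR n.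
Proof.
intros t; unfold iota_n; fold t.
assert (Hn' : 0 < INR n) by (apply lt_0_INR; lia).
assert (Ht : 0 < t < INR n) by (unfold t; split; nra).
destruct (base_Int_part t) as [B1 B2].
assert (Hi0 : (0 <= Int_part t)%Z) by (cut (-1 < Int_part t)%Z; [lia|apply lt_IZR; lra]).
assert (Hne : IZR (Int_part t) <> t).
{ intros E; apply (Hnode (Z.to_nat (Int_part t))).
  - apply INR_le; rewrite INR_IZR_INZ, Z2Nat.id by exact Hi0; lra.
  - unfold node; rewrite Z2Nat.id, E by exact Hi0; unfold t; field; lra. }
apply IZR_le in Hi0; repeat split; lra.
Qed.

Lemma rho_n_bounds : -1 < rho_n n x < 1.
Proof. destruct iota_n_bounds as [[_ H1] [H2 _]]; rewrite rho_n_eq by exact Hn; lra. Qed.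

Lemma Dn_div_approx :
  Rabs (Dn n x / INR n - powerRZ (-1) (iota_n n x) * A_ser (rho_n n x ^ 2))
  <= (/ (1 + x) + / (1 - x)) / INR n.
Proof.
assert (Hn' : 0 < INR n) by (apply lt_0_INR; lia).
destruct iota_n_bounds as [[I0 I1] [I2 I3]].
set (a := Z.to_nat (iota_n n x)); set (s := rho_n n x).
assert (Hi : (0 <= iota_n n x)%Z) by now apply le_IZR.
assert (Ha : IZR (iota_n n x) = INR a) by (unfold a; rewrite INR_IZR_INZ, Z2Nat.id; auto).
assert (Han : (a < n)%nat) by (apply INR_lt; lra).
assert (Hs : s = INR n * (x + 1) - 2 * INR a - 1) by (unfold s; rewrite rho_n_eq, Ha; auto).
assert (Hpow : powerRZ (-1) (iota_n n x) = (-1) ^ a)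
  by (rewrite pow_powerRZ; unfold a; rewrite Z2Nat.id; auto).
rewrite (Dn_div_split n a x s Han Hs rho_n_bounds), A_ser_sq, Hpow by exact rho_n_bounds.
destruct (alt_odd_series_spec s) as [_ R1]; [apply rho_n_bounds|].
destruct (alt_odd_series_spec (- s)) as [_ R2]; [pose proof rho_n_bounds; lra|].
specialize (R1 a); specialize (R2 (n - S a)%nat).
rewrite <- Rmult_minus_distr_l, Rabs_mult, pow_1_abs, Rmult_1_l, Rdiv_plus_distr.
set (P1 := sum_f_R0 (tg_alt (odd_inv s)) a) in *.
set (P2 := sum_f_R0 (tg_alt (odd_inv (- s))) (n - S a)) in *.
replace (P1 + P2 - (alt_odd_series s + alt_odd_series (- s)))
  with (- ((alt_odd_series s - P1) + (alt_odd_series (- s) - P2))) by ring.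
rewrite Rabs_Ropp; eapply Rle_trans; [apply Rabs_triang|]; apply Rplus_le_compat.
(* the two remainders are [1 / (n (1 + x) + 2)] and [1 / (n (1 - x) + 2)] *)
- eapply Rle_trans; [exact R1|]; unfold odd_inv.
  rewrite S_INR, Rdiv_def, Rmult_comm, <- Rinv_mult.
  apply Rinv_le_contravar; nra.
- eapply Rle_trans; [exact R2|]; unfold odd_inv.
  rewrite Rdiv_def, Rmult_comm, <- Rinv_mult.
  replace (INR (S (n - S a))) with (INR n - INR a) by (rewrite <- minus_INR by lia; f_equal; lia).
  apply Rinv_le_contravar; nra.
Qed.

End Fixed_n.

Definition rho_num (p q n : nat) (x : R) : nat :=
  Z.abs_nat (Z.of_nat (n * p) - (2 * iota_n n x + 1) * Z.of_nat q).

Lemma Rabs_rho_n_rational (p q n : nat) (x : R) : (0 < q)%nat -> (0 < n)%nat ->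
  x = INR p / INR q - 1 -> Rabs (rho_n n x) = INR (rho_num p q n x) / INR q.
Proof.
intros Hq Hn Hx; assert (0 < INR q) by (apply lt_0_INR; lia).
unfold rho_num; rewrite INR_IZR_INZ, Nat2Z.inj_abs_nat, abs_IZR.
rewrite minus_IZR, mult_IZR, plus_IZR, mult_IZR, <- !INR_IZR_INZ, mult_INR.
replace (INR n * INR p - (2 * IZR (iota_n n x) + 1) * INR q) with (INR q * rho_n n x)
  by (rewrite rho_n_eq, Hx by exact Hn; field; lra).
rewrite Rabs_mult, (Rabs_pos_eq (INR q)) by lra; field; lra.
Qed.

Lemma rho_num_lt (p q n : nat) (x : R) : (0 < q)%nat -> (0 < n)%nat ->
  x = INR p / INR q - 1 -> -1 < x < 1 ->
  (forall k, (k <= n)%nat -> x <> node (Z.of_nat k) n) -> (rho_num p q n x < q)%nat.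
Proof.
intros Hq Hn Hx HxI Hnode; assert (0 < INR q) by now apply lt_0_INR.
pose proof (rho_n_bounds n x Hn HxI Hnode) as Hb.
assert (Hb' : Rabs (rho_n n x) < 1) by (apply Rabs_def1; lra).
rewrite (Rabs_rho_n_rational p q n x Hq Hn Hx) in Hb'.
apply INR_lt; apply Rlt_div_l in Hb'; lra.
Qed.

Lemma powerRZ_m1_cases (z : Z) : powerRZ (-1) z = 1 \/ powerRZ (-1) z = -1.
Proof.
assert (Hpow : forall k, (-1) ^ k = 1 \/ (-1) ^ k = -1).
{ intros k; destruct (Nat.Even_or_Odd k) as [[i ->]|[i ->]];
    [left; apply pow_1_even|right; rewrite Nat.add_1_r; apply pow_1_odd]. }
destruct z as [|k|k]; simpl; [now left|apply Hpow|].
destruct (Hpow (Pos.to_nat k)) as [-> | ->]; [left; apply Rinv_1|right; lra].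
Qed.

Lemma is_lim_seq_eventually_value (v : nat -> R) (L : Rbar) (w : R) :
  is_lim_seq v L -> eventually (fun j => v j = w -> L = Finite w).
Proof.
intros Hv; destruct (Rbar_eq_dec L (Finite w)) as [E|E]; [exists 0%nat; auto|].
apply is_lim_seq_spec in Hv; destruct L as [l| |].
- assert (Hd : 0 < Rabs (l - w)) by (apply Rabs_pos_lt; intros H; apply E; f_equal; lra).
  destruct (Hv (mkposreal _ Hd)) as [N HN]; exists N; intros j Hj Hvj.
  specialize (HN j Hj); rewrite Hvj, Rabs_minus_sym in HN; simpl in HN; lra.
- destruct (Hv w) as [N HN]; exists N; intros j Hj Hvj; specialize (HN j Hj); lra.
- destruct (Hv w) as [N HN]; exists N; intros j Hj Hvj; specialize (HN j Hj); lra.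
Qed.

Lemma eventually_forall_In {T : Type} (P : T -> nat -> Prop) (F : list T) :
  (forall w, In w F -> eventually (P w)) ->
  eventually (fun j => forall w, In w F -> P w j).
Proof.
induction F as [|w0 F IH]; intros H; [exists 0%nat; intros _ _ w [] |].
apply (filter_imp (fun j => P w0 j /\ forall w, In w F -> P w j)).
- intros j [H0 H1] w [<- | Hw]; auto.
- apply filter_and; [apply H; now left|apply IH; intros w Hw; apply H; now right].
Qed.

Lemma is_lim_seq_finite_range (v : nat -> R) (F : list R) (L : Rbar) :
  eventually (fun j => In (v j) F) -> is_lim_seq v L ->
  exists l, L = Finite l /\ eventually (fun j => v j = l).
Proof.
intros HF Hv.
assert (H : eventually (fun j => L = Finite (v j))).
{ generalize (filter_and _ _ HF (eventually_forall_In _ F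
    (fun w _ => is_lim_seq_eventually_value v L w Hv))).
  apply filter_imp; intros j [Hin Hall]; exact (Hall _ Hin eq_refl). }
destruct H as [N HN]; exists (v N); split; [apply HN; lia|].
exists N; intros j Hj; rewrite (HN N (le_n N)) in HN; specialize (HN j Hj).
now injection HN.
Qed.

Lemma signed_pos_inj (s1 s2 c1 c2 : R) : (s1 = 1 \/ s1 = -1) -> (s2 = 1 \/ s2 = -1) ->
  0 < c1 -> 0 < c2 -> s1 * c1 = s2 * c2 -> s1 = s2 /\ c1 = c2.
Proof. intros [-> | ->] [-> | ->] H1 H2 E; split; lra. Qed.

Lemma sgn_signed_pos (s c : R) : (s = 1 \/ s = -1) -> 0 < c -> sgn (s * c) = s.
Proof.
intros [-> | ->] Hc; unfold sgn.
- destruct (Rlt_dec 0 (1 * c)); [reflexivity|lra].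
- destruct (Rlt_dec 0 (-1 * c)); [lra|destruct (Rlt_dec (-1 * c) 0); [reflexivity|lra]].
Qed.

Lemma is_lim_seq_signed_values (f : nat -> R) (q : nat) (u s : nat -> R) (k : nat -> nat)
    (L : Rbar) :
  (forall m, (m < q)%nat -> 0 < f m) ->
  (forall m1 m2, (m1 < q)%nat -> (m2 < q)%nat -> f m1 = f m2 -> m1 = m2) ->
  eventually (fun j => (s j = 1 \/ s j = -1) /\ (k j < q)%nat) ->
  is_lim_seq (fun j => u j - s j * f (k j)) 0 ->
  is_lim_seq u L ->
  exists l, L = Finite l /\ exists m, (m < q)%nat /\ Rabs l = f m /\
    eventually (fun j => s j = sgn l /\ k j = m).
Proof.
intros Hpos Hinj Hsk Herr Hu.
set (v j := s j * f (k j)).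
assert (Hv : is_lim_seq v L).
{ apply (is_lim_seq_ext (fun j => u j - (u j - v j))); [intros j; ring|].
  apply (is_lim_seq_minus _ _ L 0); [exact Hu|exact Herr|].
  destruct L; try easy; unfold is_Rbar_minus, is_Rbar_plus; simpl; f_equal; f_equal; ring. }
set (F := map f (seq 0 q) ++ map (fun m => - f m) (seq 0 q)).
assert (HF : eventually (fun j => In (v j) F)).
{ revert Hsk; apply filter_imp; intros j Hj; destruct Hj as [[Hs | Hs] Hk];
    apply in_or_app; unfold v; rewrite Hs; [left|right].
  - rewrite Rmult_1_l; apply (in_map f), in_seq; lia.
  - replace (-1 * f (k j)) with (- f (k j)) by ring.
    apply (in_map (fun m => - f m)), in_seq; lia. }
destruct (is_lim_seq_finite_range v F L HF Hv) as [l [-> Hl]].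
destruct (filter_and _ _ Hsk Hl) as [N HN].
destruct (HN N (le_n N)) as [[HsN HkN] HvN]; unfold v in HvN.
exists l; split; [reflexivity|]; exists (k N); split; [exact HkN|]; split.
- rewrite <- HvN, Rabs_mult, (Rabs_pos_eq (f (k N))) by (left; auto).
  destruct HsN as [-> | ->]; rewrite ?Rabs_R1, ?Rabs_m1; ring.
- exists N; intros j Hj; destruct (HN j Hj) as [[Hsj Hkj] Hvj]; unfold v in Hvj.
  rewrite <- Hvj in HvN.
  destruct (signed_pos_inj _ _ _ _ HsN Hsj (Hpos _ HkN) (Hpos _ Hkj) HvN) as [E1 E2].
  split; [rewrite <- Hvj; symmetry; apply sgn_signed_pos; auto|apply Hinj; auto].
Qed.

Lemma strictly_increasing_ge (n : nat -> nat) : strictly_increasing n -> forall j, (j <= n j)%nat.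
Proof.
intros Hn j; induction j as [|j IH]; [lia|].
pose proof (Hn j (S j) ltac:(lia)); lia.
Qed.

Lemma is_lim_seq_div_subseq (n : nat -> nat) (K : R) :
  strictly_increasing n -> is_lim_seq (fun j => K / INR (n j)) 0.
Proof.
intros Hn; apply (is_lim_seq_div _ _ K p_infty); try easy.
- apply is_lim_seq_const.
- apply (filterlim_comp _ _ _ n INR _ eventually); [|exact is_lim_seq_INR].
  apply eventually_subseq; intros j; apply Hn; lia.
- unfold is_Rbar_div, is_Rbar_mult; simpl; f_equal; f_equal; ring.
Qed.

Theorem lemma8 (p q : nat) (n : nat -> nat) (x : R) (L : Rbar)
  (hq : q <> 0%nat)
  (hx : x = INR p / INR q - 1)
  (hxI : -1 < x < 1)
  (hn : strictly_increasing n)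
  (hreg : regular n x)
  (hlim : is_lim_seq (fun j => Dn (n j) x / INR (n j)) L) :
  exists l : R, L = Finite l /\
    exists m : nat, (m < q)%nat /\
      Rabs l = A_ser (INR m ^ 2 / INR q ^ 2) /\
      exists j0 : nat, forall j : nat, (j0 <= j)%nat ->
        powerRZ (-1) (iota_n (n j) x) = sgn l /\
        Rabs (rho_n (n j) x) = INR m / INR q.
Proof.
assert (Hq : (0 < q)%nat) by lia; assert (Hq' : 0 < INR q) by now apply lt_0_INR.
assert (Hgood : eventually (fun j => (0 < n j)%nat /\
                  forall k, (k <= n j)%nat -> x <> node (Z.of_nat k) (n j))).
{ destruct hreg as [j0 Hj0]; exists (S j0); intros j Hj.
  pose proof (strictly_increasing_ge n hn j); split; [lia|apply Hj0; lia]. }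
assert (Hrho : eventually (fun j =>
          Rabs (rho_n (n j) x) = INR (rho_num p q (n j) x) / INR q /\
          (rho_num p q (n j) x < q)%nat)).
{ revert Hgood; apply filter_imp; intros j [Hn Hnode]; split;
    [apply Rabs_rho_n_rational|apply (rho_num_lt p q (n j) x)]; auto. }
destruct (is_lim_seq_signed_values (fun m => A_ser (INR m ^ 2 / INR q ^ 2)) q
  (fun j => Dn (n j) x / INR (n j)) (fun j => powerRZ (-1) (iota_n (n j) x))
  (fun j => rho_num p q (n j) x) L) as [l [HL [m [Hm [Hlm Hev]]]]].
- intros m Hm; apply A_ser_pos, ratio_sq_bounds, Hm.
- apply A_ser_ratio_sq_inj.
- revert Hrho; apply filter_imp; intros j [_ Hj]; split; [apply powerRZ_m1_cases|exact Hj].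
- apply is_lim_seq_abs_0.
  apply (is_lim_seq_le_le_loc (fun _ => 0) _ (fun j => (/ (1 + x) + / (1 - x)) / INR (n j)));
    [|apply is_lim_seq_const|now apply is_lim_seq_div_subseq].
  generalize (filter_and _ _ Hgood Hrho); apply filter_imp; intros j [[Hn Hnode] [Habs _]].
  split; [apply Rabs_pos|].
  replace (INR (rho_num p q (n j) x) ^ 2 / INR q ^ 2) with (rho_n (n j) x ^ 2)
    by (rewrite <- pow2_abs, Habs; field; lra).
  exact (Dn_div_approx (n j) x Hn hxI Hnode).
- exact hlim.
- exists l; split; [exact HL|]; exists m; split; [exact Hm|]; split; [exact Hlm|].
  destruct (filter_and _ _ Hev Hrho) as [j0 Hj0]; exists j0; intros j Hj.
  destruct (Hj0 j Hj) as [[Hs Hk] [Habs _]]; rewrite Habs, Hk; auto.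
Qed.
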